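(* Let $S$ be a right simple semigroup with no idempotent, let $a\in S$, and let $A=S^1a$. Then $A\setminus\{a\}=Sa$, the $\mathcal{R}$-classes of the semigroup $A$ are exactly $\{a\}$ and $Sa$, and $\mathrm{H}_{\mathcal{R}}(A)=2$.
   Context: A semigroup is right simple if it has no proper right ideals. $S^1$ denotes $S$ with an identity adjoined. For a semigroup $M$, Green's preorder: $u\leq_{\mathcal{R}} v$ iff $uM^1\subseteq vM^1$; $\mathcal{R}$ is the associated equivalence; the $\mathcal{R}$-height $\mathrm{H}_{\mathcal{R}}(M)$ is the supremum of the cardinalities of chains in the poset of $\mathcal{R}$-classes. Here $\mathcal{R}$ and $\mathrm{H}_{\mathcal{R}}$ are taken in the semigroup $A$ itself. *)

From mathcomp Require Import all_boot.
From mathcomp Require Import boolp classical_sets.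
From Stdlib Require Import List.

Set Implicit Arguments. Unset Strict Implicit. Unset Printing Implicit Defensive.
Local Open Scope classical_set_scope.

Definition associative_op (S : Type) (mul : S -> S -> S) :=
  forall x y z, mul x (mul y z) = mul (mul x y) z.

Definition right_ideal (S : Type) (mul : S -> S -> S) (I : set S) :=
  I !=set0 /\ forall x s, I x -> I (mul x s).

Definition right_simple (S : Type) (mul : S -> S -> S) :=
  forall I : set S, right_ideal mul I -> I = [set: S].

Definition has_no_idempotent (S : Type) (mul : S -> S -> S) :=
  forall e : S, mul e e <> e.

Definition left_mult_set (S : Type) (mul : S -> S -> S) (a : S) : set S :=
  [set mul s a | s in [set: S]].
Definition left_mult_set1 (S : Type) (mul : S -> S -> S) (a : S) : set S :=
  [set a] `|` left_mult_set mul a.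

Definition rA1 (S : Type) (mul : S -> S -> S) (A : set S) (u : S) : set S :=
  [set u] `|` [set mul u w | w in A].

(* Green's R-preorder in the semigroup A: u <=_R v iff u A^1 ⊆ v A^1. *)
Definition leR (S : Type) (mul : S -> S -> S) (A : set S) (u v : S) : Prop :=
  rA1 mul A u `<=` rA1 mul A v.

Definition Rrel (S : Type) (mul : S -> S -> S) (A : set S) (u v : S) : Prop :=
  leR mul A u v /\ leR mul A v u.

Definition Rclass (S : Type) (mul : S -> S -> S) (A : set S) (u : S) : set S :=
  [set x | A x /\ Rrel mul A x u].

Definition is_Rclass (S : Type) (mul : S -> S -> S) (A : set S) (C : set S) : Prop :=
  exists2 u, A u & C = Rclass mul A u.

Definition leRclass (S : Type) (mul : S -> S -> S) (A : set S) (C D : set S) : Prop :=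
  exists u v, [/\ A u, A v, C = Rclass mul A u, D = Rclass mul A v & leR mul A u v].

Definition Rchain (S : Type) (mul : S -> S -> S) (A : set S) (s : list (set S)) : Prop :=
  [/\ NoDup s, (forall C, In C s -> is_Rclass mul A C) &
      (forall C D, In C s -> In D s -> leRclass mul A C D \/ leRclass mul A D C)].

(* H_R(A) = n (n finite): the supremum of the cardinalities of chains of
   R-classes is n, i.e. some chain has n elements and every (finite) chain has
   at most n elements (an infinite chain would contain arbitrarily long finite
   chains). *)
Definition R_height_eq (S : Type) (mul : S -> S -> S) (A : set S) (n : nat) : Prop :=
  (exists s, Rchain mul A s /\ length s = n) /\
  (forall s, Rchain mul A s -> (length s <= n)%N).

From mathcomp Require Import all_boot.
From mathcomp Require Import boolp classical_sets.
From Stdlib Require Import List.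
Local Open Scope classical_set_scope.
Set Implicit Arguments.

(* In a right simple semigroup every x S is a right ideal, so x S = S.  If
   s a = a then s fixes a S = S pointwise on the left; this makes any e with
   s e = s idempotent.  Hence, without idempotents, a is not in S a, every
   element of S a generates S a as a right ideal of A = S^1 a (right simplicity
   again), while a A^1 = {a} u S a strictly contains it.  So the R-classes of
   A are S a < {a}. *)

Lemma NoDup_length_le2 (T : Type) (x y : T) (s : list T) :
  NoDup s -> (forall z, In z s -> z = x \/ z = y) -> (length s <= 2)%N.
Proof.
move=> nd_s s_xy; apply/leP; apply: (NoDup_incl_length (l' := x :: y :: nil)) => //.
by move=> z /s_xy [->|->]; [left | right; left].
Qed.

Lemma rA1_leR (S : Type) (mul : S -> S -> S) (B : set S) u v :
  associative_op mul -> (forall x y, B x -> B y -> B (mul x y)) ->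
  rA1 mul B u v -> leR mul B v u.
Proof.
move=> assoc mulB; case=> [->|[w Bw <-]] // x [->|[w' Bw' <-]].
  by right; exists w.
by right; exists (mul w w'); [exact: mulB | rewrite assoc].
Qed.

Lemma leRclass_refl (S : Type) (mul : S -> S -> S) (B C : set S) :
  is_Rclass mul B C -> leRclass mul B C C.
Proof. by case=> u Bu ->; exists u, u; split. Qed.

Section RightSimpleWithoutIdempotent.

Variables (S : Type) (mul : S -> S -> S).
Hypothesis assoc : associative_op mul.
Hypothesis rs : right_simple mul.
Hypothesis noid : has_no_idempotent mul.

Lemma right_simple_mulr_surj x y : exists z, mul x z = y.
Proof.
have xS_full : [set mul x z | z in [set: S]] = [set: S].
  apply: rs; split; first by exists (mul x x), x.
  by move=> _ s [z _ <-]; exists (mul z s) => //; rewrite assoc.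
have : [set mul x z | z in [set: S]] y by rewrite xS_full.
by case=> z _ <-; exists z.
Qed.

Lemma mull_neq s a : mul s a <> a.
Proof.
move=> sa_a.
have [e se_s] := right_simple_mulr_surj s s.
have [t at_e] := right_simple_mulr_surj a e.
have se_e : mul s e = e by rewrite -at_e assoc sa_a.
have ee_e : mul e e = e by rewrite -{1}se_e se_s.
exact: noid ee_e.
Qed.

Variable a : S.
Notation Sa := (left_mult_set mul a).
Notation A := (left_mult_set1 mul a).

Lemma notin_left_mult_set : ~ Sa a.
Proof. by case=> s _; apply: mull_neq. Qed.

Lemma mull_left_mult_set1 x y : A y -> Sa (mul x y).
Proof.
case=> [->|[t _ <-]]; first by exists x.
by exists (mul x t) => //; rewrite assoc.
Qed.

Lemma rA1_left_mult_set1_leR u v : rA1 mul A u v -> leR mul A v u.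
Proof.
apply: rA1_leR => // x y _ Ay.
by right; apply: mull_left_mult_set1.
Qed.

Lemma left_mult_set_rA1 u v : Sa u -> Sa v -> rA1 mul A u v.
Proof.
case=> s _ <-; case=> t _ <-.
have [x sax_t] := right_simple_mulr_surj (mul s a) t.
by right; exists (mul x a); [right; exists x | rewrite assoc sax_t].
Qed.

Lemma notin_rA1_left_mult_set u : Sa u -> ~ rA1 mul A u a.
Proof.
move=> Sau [u_a|[w Aw uw_a]]; first by apply: notin_left_mult_set; move: Sau; rewrite -u_a.
by move: (mull_left_mult_set1 u Aw); rewrite uw_a; apply: notin_left_mult_set.
Qed.

Lemma Rclass_a : Rclass mul A a = [set a].
Proof.
apply/seteqP; split=> x; last by move=> ->; split; [left | split].
case=> [[->|Sax] [_ le_ax]] //.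
by case: (notin_rA1_left_mult_set Sax); apply: le_ax; left.
Qed.

Lemma Rclass_left_mult_set u : Sa u -> Rclass mul A u = Sa.
Proof.
move=> Sau; apply/seteqP; split=> x.
  case=> [[->|//] [le_au _]].
  by case: (notin_rA1_left_mult_set Sau); apply: le_au; left.
move=> Sax; split; first by right.
by split; apply: rA1_left_mult_set1_leR; apply: left_mult_set_rA1.
Qed.

Lemma left_mult_set1_setD : A `\ a = Sa.
Proof.
apply/seteqP; split=> x; first by case=> [[->|//] /= /(_ erefl)].
move=> Sax; split; first by right.
by move=> /= x_a; apply: notin_left_mult_set; move: Sax; rewrite x_a.
Qed.

Lemma is_Rclass_left_mult_set1 C : is_Rclass mul A C <-> C = [set a] \/ C = Sa.
Proof.
have Sa_aa : Sa (mul a a) by exists a.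
split.
  case=> u [->|Sau] ->; first by left; apply: Rclass_a.
  by right; apply: Rclass_left_mult_set.
case=> ->; first by exists a; [left | rewrite Rclass_a].
by exists (mul a a); [right | rewrite Rclass_left_mult_set].
Qed.

Lemma leRclass_left_mult_set : leRclass mul A Sa [set a].
Proof.
have Sa_aa : Sa (mul a a) by exists a.
exists (mul a a), a; split; [by right | by left | | by rewrite Rclass_a |].
  by rewrite Rclass_left_mult_set.
by apply: rA1_left_mult_set1_leR; right; exists a => //; left.
Qed.

Lemma R_height_left_mult_set1 : R_height_eq mul A 2.
Proof.
have RclassP := is_Rclass_left_mult_set1.
have Sa_neq_a : Sa <> [set a] by move=> Sa_a; apply: notin_left_mult_set; rewrite Sa_a.
split; last first.
  move=> s [nd_s s_Rclass _]; apply: (NoDup_length_le2 (x := [set a]) (y := Sa) nd_s).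
  by move=> C /s_Rclass/RclassP.
exists ([set a] :: Sa :: nil); split => //; split.
- by constructor; [case=> // Sa_a; exact: Sa_neq_a Sa_a | constructor; [case | constructor]].
- by move=> C [<-|[<-|[]]]; apply/RclassP; [left | right].
- have chain_refl C : In C ([set a] :: Sa :: nil) -> leRclass mul A C C.
    by move=> inC; apply: leRclass_refl; apply/RclassP; case: inC => [<-|[<-|[]]]; auto.
  move=> C D inC inD; move: (chain_refl C inC) (chain_refl D inD).
  by case: inC => [<-|[<-|[]]]; case: inD => [<-|[<-|[]]]; auto using leRclass_left_mult_set.
Qed.

End RightSimpleWithoutIdempotent.

Theorem proposition4p7 (S : Type) (mul : S -> S -> S)
  (assoc : associative_op mul) (rs : right_simple mul)
  (noid : has_no_idempotent mul) (a : S) :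
  let A := left_mult_set1 mul a in
  [/\ A `\ a = left_mult_set mul a,
      (forall C : set S, is_Rclass mul A C <-> (C = [set a] \/ C = left_mult_set mul a))
    & R_height_eq mul A 2].
Proof.
split.
- exact: left_mult_set1_setD.
- exact: is_Rclass_left_mult_set1.
- exact: R_height_left_mult_set1.
Qed.
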